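(* Let $\mathbf{B}=\mathbf{B}_+\,\dot\cup\,\mathbf{B}'\in\dot{\mathbb{P}}(\mathbb{L}(\mathbf{C}))$ with $|\mathbf{B}|=|\mathbf{C}|$, and suppose every $L\in\mathbf{B}_+$ has a positive monotonic effect on $D$ relative to $\mathbf{C}$. If for some tree $\mathfrak{T}$ on $\mathbf{B}_+$ and some $\omega^*\in\Omega$ $$D_{\mathbf{B}=\mathbf{1}}(\omega^* )-\sum_{L\in\mathbf{B}_+}D_{\mathbf{B}\setminus\{L\}=\mathbf{1},L=0}(\omega^* )-\sum_{\varnothing\neq\widetilde{\mathbf{B}}\subseteq\mathbf{B}'}D_{\mathbf{B}\setminus\widetilde{\mathbf{B}}=\mathbf{1},\widetilde{\mathbf{B}}=\mathbf{0}}(\omega^* )+\sum_{\mathbf{E}\in\mathfrak{T}}D_{\mathbf{B}\setminus\mathbf{E}=\mathbf{1},\mathbf{E}=\mathbf{0}}(\omega^* )>0,$$ then $\mathbf{B}$ is singular for $\mathcal{D}(\mathbf{C},\Omega)$.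
   Context: Events are binary random variables on a population $\Omega$; $\overline{X}=1-X$; $\mathbb{L}(\mathbf{C})=\mathbf{C}\cup\{\overline{X}:X\in\mathbf{C}\}$; $\dot{\mathbb{P}}(\mathbb{L}(\mathbf{C}))$ is the set of subsets of $\mathbb{L}(\mathbf{C})$ not containing both $X$ and $\overline{X}$; $(L)_{\mathbf{c}}$ is the value of literal $L$ under assignment $\mathbf{c}$; $\bigwedge(\mathbf{B})=\min_{L\in\mathbf{B}}L$. Potential outcomes $D_{\mathbf{c}}(\omega)\in\{0,1\}$. Since $|\mathbf{B}|=|\mathbf{C}|$, values of the literals of $\mathbf{B}$ determine an assignment to $\mathbf{C}$; $D_{\mathbf{B}\setminus\widetilde{\mathbf{B}}=\mathbf{1},\widetilde{\mathbf{B}}=\mathbf{0}}$ sets the literals in $\widetilde{\mathbf{B}}$ to 0 and the rest of $\mathbf{B}$ to 1. A literal $L$ has a positive monotonic effect on $D$ relative to $\mathbf{C}$ if for all $\omega$ and all assignments $\mathbf{c},\mathbf{c}'$ differing only in the variable underlying $L$ with $(L)_{\mathbf{c}}=1,(L)_{\mathbf{c}'}=0$, $D_{\mathbf{c}}(\omega)\ge D_{\mathbf{c}'}(\omega)$. A tree on a finite set $\mathbf{S}$ is a set $\mathfrak{T}$ of 2-element subsets of $\mathbf{S}$ with $|\mathfrak{T}|=|\mathbf{S}|-1$ connecting all elements (empty if $|\mathbf{S}|\le1$). $\mathbf{B}$ is a sufficient cause for $D$ relative to $\mathbf{C}$ for $\omega^*$ if some $\mathbf{c}^*$ has $(\bigwedge(\mathbf{B}))_{\mathbf{c}^*}=1$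 and $D_{\mathbf{c}}(\omega^* )=1$ whenever $(\bigwedge(\mathbf{B}))_{\mathbf{c}}=1$; minimal if no proper subset is such; singular for $\omega^*$ if minimal and no other $\mathbf{B}'\in\dot{\mathbb{P}}(\mathbb{L}(\mathbf{C}))$ is a minimal sufficient cause for $\omega^*$; singular for $\mathcal{D}(\mathbf{C},\Omega)$ if singular for some $\omega^*\in\Omega$. *)

From mathcomp Require Import all_boot all_order all_algebra.
Set Implicit Arguments. Unset Strict Implicit. Unset Printing Implicit Defensive.
Import GRing.Theory Num.Theory.

(* Variables (the events in C) are indexed by a finite type V.
   A literal is a pair (x, b): b = true stands for X = x, b = false for its
   complement (1 - X). *)

Definition litval (V : finType) (L : V * bool) (c : {ffun V -> bool}) : bool :=
  if L.2 then c L.1 else ~~ c L.1.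

(* B belongs to \dot{P}(L(C)): it does not contain both X and its complement *)
Definition consistent (V : finType) (B : {set V * bool}) : bool :=
  [forall x : V, ~~ (((x, true) \in B) && ((x, false) \in B))].

(* /\(B) evaluated at the assignment c (min over literals; empty min = 1) *)
Definition conjB (V : finType) (B : {set V * bool}) (c : {ffun V -> bool}) : bool :=
  [forall L in B, litval L c].

(* The assignment "B \ Bt = 1, Bt = 0" (for B consistent with |B| = |C|,
   B holds exactly one literal per variable): literals of B in Bt are set to 0,
   the other literals of B to 1. *)
Definition setB (V : finType) (B Bt : {set V * bool}) : {ffun V -> bool} :=
  [ffun x => if (x, true) \in B then (x, true) \notin Bt else (x, false) \in Bt].

Definition pos_monotonic (V : finType) (Omega : Type)
  (D : Omega -> {ffun V -> bool} -> bool) (L : V * bool) : Prop :=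
  forall (w : Omega) (c c' : {ffun V -> bool}),
    (forall y, y != L.1 -> c y = c' y) ->
    litval L c -> ~~ litval L c' -> (D w c' <= D w c)%N.

Definition is_tree (A : finType) (S : {set A}) (T : {set {set A}}) : Prop :=
  [/\ (forall E, E \in T -> (E \subset S) && (#|E| == 2)),
      #|T| = (#|S| - 1)%N &
      (forall x y, x \in S -> y \in S ->
         connect (fun a b => [set a; b] \in T) x y)].

Definition sufficient (V : finType) (Omega : Type)
  (D : Omega -> {ffun V -> bool} -> bool) (B : {set V * bool}) (w : Omega) : Prop :=
  (exists c, conjB B c) /\ (forall c, conjB B c -> D w c).

Definition minimal_sufficient (V : finType) (Omega : Type)
  (D : Omega -> {ffun V -> bool} -> bool) (B : {set V * bool}) (w : Omega) : Prop :=
  sufficient D B w /\ (forall B0 : {set V * bool}, B0 \proper B -> ~ sufficient D B0 w).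

Definition singular_for (V : finType) (Omega : Type)
  (D : Omega -> {ffun V -> bool} -> bool) (B : {set V * bool}) (w : Omega) : Prop :=
  minimal_sufficient D B w /\
  (forall B' : {set V * bool}, consistent B' -> minimal_sufficient D B' w -> B' = B).

Definition singular (V : finType) (Omega : Type)
  (D : Omega -> {ffun V -> bool} -> bool) (B : {set V * bool}) : Prop :=
  exists w : Omega, singular_for D B w.

Definition Dz (V : finType) (Omega : Type)
  (D : Omega -> {ffun V -> bool} -> bool) (w : Omega) (c : {ffun V -> bool}) : int :=
  Posz (nat_of_bool (D w c)).

From mathcomp Require Import all_boot all_order all_algebra.
From mathcomp Require Import zify.
Import GRing.Theory Num.Theory.
Set Implicit Arguments. Unset Strict Implicit. Unset Printing Implicit Defensive.

(* Since B is consistent and |B| = |C|, B contains exactly one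
   literal per variable, so every assignment is c = setB B F where F is the set
   of literals of B that c falsifies; c0 := setB B set0 makes all of B true.
   Let S be the set of L in B+ with D(setB B {L}) = 1.  Monotonicity of the
   literals of B+ shows that an edge E of the tree with D(setB B E) = 1 lies
   inside S, and a tree has at most |S| - 1 edges inside a nonempty S.  Hence
   the displayed sum is at most D(c0) - [S <> 0] - (sum over B'), and its
   positivity forces D(c0) = 1, S = 0 and D(setB B Bt) = 0 for all nonempty
   Bt of B'.  Monotonicity again gives D(setB B F) = 0 for every nonempty
   F of B, i.e. c0 is the only assignment with D = 1 at w.  Finally, a set of
   literals whose conjunction is true exactly at one assignment where D holds
   is a singular cause: B is sufficient, minimal (flip one literal), and any
   minimal sufficient B'' is satisfied by c0 only, hence equals B. *)

Section Literals.
Variables (V : finType) (B : {set V * bool}).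
Hypothesis B_consistent : consistent B.

Lemma consistent_lit (x : V) : (x, true) \in B -> (x, false) \in B -> False.
Proof. by move: B_consistent => /forallP /(_ x) /negP nB inT inF; apply: nB; rewrite inT. Qed.

Lemma litval_setB (F : {set V * bool}) (L : V * bool) :
  L \in B -> litval L (setB B F) = (L \notin F).
Proof.
case: L => x [] LB; rewrite /litval /setB ffunE /=; first by rewrite LB.
by case: ifP => // xT; case: (consistent_lit xT LB).
Qed.

Lemma setB1_neq0 (L : V * bool) : L \in B -> setB B [set L] != setB B set0.
Proof.
move=> LB; apply/eqP => e.
by move: (litval_setB [set L] LB); rewrite e !litval_setB // !inE eqxx.
Qed.

Lemma conjB_setB1 (B0 : {set V * bool}) (L : V * bool) :
  B0 \subset B -> L \notin B0 -> conjB B0 (setB B [set L]).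
Proof.
move=> sB0 LB0; apply/forallP => L0; apply/implyP => L0B0.
rewrite litval_setB ?(subsetP sB0 _ L0B0) // inE.
by apply: contraNneq LB0 => <-.
Qed.

Lemma conjB_setB0 : conjB B (setB B set0).
Proof. by apply/forallP => L; apply/implyP => LB; rewrite litval_setB // inE. Qed.

(* From here on B has one literal per variable. *)
Hypothesis B_full : #|B| = #|V|.

(* Each variable occurs in B: projecting B to V is injective, hence onto. *)
Lemma lit_of_var (x : V) : exists b, (x, b) \in B.
Proof.
have fst_inj : {in B &, injective (@fst V bool)}.
  move=> [y b] [y' b'] yB y'B /= eyy'; subst y'.
  case: b b' yB y'B => [] [] // yB y'B.
    by case: (consistent_lit yB y'B).
  by case: (consistent_lit y'B yB).
have fstB : (@fst V bool) @: B = setT.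
  by apply/eqP; rewrite eqEcard subsetT cardsT (card_in_imset fst_inj) B_full leqnn.
have : x \in (@fst V bool) @: B by rewrite fstB inE.
by case/imsetP => -[y b] yB /= ->; exists b.
Qed.

Lemma setB_repr (c : {ffun V -> bool}) : c = setB B [set L in B | ~~ litval L c].
Proof.
apply/ffunP => x; rewrite /setB ffunE.
case: (lit_of_var x) => -[] xB; first by rewrite xB inE xB /litval /= negbK.
have xT : (x, true) \notin B by apply/negP => xT; case: (consistent_lit xT xB).
by rewrite (negbTE xT) inE xB /litval /= negbK.
Qed.

Lemma conjB_eq_setB0 (c : {ffun V -> bool}) : conjB B c -> c = setB B set0.
Proof.
move=> Bc; rewrite [LHS]setB_repr; congr setB; apply/setP => L.
by rewrite !inE; case LB: (L \in B); rewrite //= (implyP (forallP Bc L)).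
Qed.

Lemma conjB_setB0_sub (B' : {set V * bool}) : conjB B' (setB B set0) -> B' \subset B.
Proof.
move=> c0B'; apply/subsetP => -[x b] xB'.
have xb : litval (x, b) (setB B set0) by move: (forallP c0B' (x, b)); rewrite xB'.
case: (lit_of_var x) => b0 xB.
have xb0 : litval (x, b0) (setB B set0) by rewrite litval_setB // inE.
suff eb : b = b0 by rewrite eb.
by move: xb xb0; rewrite /litval /=; case: (b); case: (b0); case: (setB B set0 x).
Qed.

End Literals.

Section Monotonicity.
Variables (V : finType) (Omega : Type) (D : Omega -> {ffun V -> bool} -> bool).
Variables (B : {set V * bool}) (w : Omega).
Hypothesis B_consistent : consistent B.

Lemma mono_step (F : {set V * bool}) (L : V * bool) :
  L \in B -> pos_monotonic D L -> L \in F ->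
  (D w (setB B F) <= D w (setB B (F :\ L)))%N.
Proof.
move=> LB monoL LF; apply: (monoL w).
- move=> y yL; rewrite /setB !ffunE !in_setD1.
  have yLb b : (y, b) != L by apply: contraNneq yL => <-.
  by rewrite !yLb.
- by rewrite litval_setB // in_setD1 eqxx.
- by rewrite litval_setB // negbK.
Qed.

Lemma mono_subset (F G : {set V * bool}) :
  F \subset G -> (forall L, L \in G :\: F -> L \in B /\ pos_monotonic D L) ->
  (D w (setB B G) <= D w (setB B F))%N.
Proof.
move: {2}#|G :\: F| (erefl #|G :\: F|) => n; elim: n G => [|n IH] G nGF sFG monoGF.
  move/eqP: nGF; rewrite cards_eq0 setD_eq0 => sGF.
  by have -> : G = F by apply/eqP; rewrite eqEsubset sGF.
have [L LGF] : exists L, L \in G :\: F by apply/set0Pn; rewrite -card_gt0 nGF.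
have [LB monoL] := monoGF L LGF.
move: (LGF); rewrite inE => /andP [LF LG].
apply: leq_trans (mono_step LB monoL LG) (IH _ _ _ _).
- by move: nGF; rewrite (cardsD1 L) LGF setDDl setUC -setDDl => -[].
- apply/subsetP => y yF; rewrite in_setD1 (subsetP sFG _ yF) andbT.
  by apply: contraNneq LF => <-.
- by move=> L' /setDP [/setD1P [_ L'G] L'F]; apply: monoGF; rewrite inE L'F.
Qed.

Lemma mono_flip_one (F : {set V * bool}) (L : V * bool) :
  (forall L', L' \in F -> L' \in B /\ pos_monotonic D L') -> L \in F ->
  D w (setB B F) -> D w (setB B [set L]).
Proof.
move=> monoF LF DF; have := mono_subset (_ : [set L] \subset F).
rewrite sub1set LF DF lt0b; apply=> //.
by move=> L' /setDP [L'F _]; apply: monoF.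
Qed.

End Monotonicity.

Lemma path_cross (A : finType) (e : rel A) (S : {set A}) (p : seq A) (x : A) :
  x \notin S -> last x p \in S -> path e x p ->
  exists a b, [/\ e a b, a \notin S & b \in S].
Proof.
elim: p x => [|y p IH] x /= xS; first by move=> xS'; rewrite xS' in xS.
move=> lastS /andP [exy yp].
case yS: (y \in S); first by exists x, y.
by apply: (IH y) => //; rewrite yS.
Qed.

Section TreeEdges.
Variables (A : finType) (X : {set A}) (T : {set {set A}}).

(* In a connected edge set on X, at least |X \ S| edges leave a nonempty S:
   grow S one boundary vertex at a time, each step needing a new edge. *)
Lemma edges_leaving_bound :
  (forall E, E \in T -> E \subset X) ->
  (forall x y, x \in X -> y \in X -> connect (fun a b => [set a; b] \in T) x y) ->
  forall S : {set A}, S \subset X -> S != set0 ->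
  #|X :\: S| <= #|[set E in T | ~~ (E \subset S)]|.
Proof.
move=> TX Tconn S; move: {2}#|X :\: S| (erefl #|X :\: S|) => n.
elim: n S => [|n IH] S nXS SX S0; first by rewrite nXS.
have [v vXS] : exists v, v \in X :\: S by apply/set0Pn; rewrite -card_gt0 nXS.
have [s sS] : exists s, s \in S by apply/set0Pn.
move: (vXS); rewrite inE => /andP [vS vX].
case/connectP: (Tconn v s vX (subsetP SX s sS)) => p vp lastp.
have [a [b [abT aS bS]]] := path_cross vS (etrans (congr1 (mem S) (esym lastp)) sS) vp.
have aX : a \in X by apply: (subsetP (TX _ abT)); rewrite !inE eqxx.
have nXaS : #|X :\: (a |: S)| = n.
  move: (cardsD1 a (X :\: S)); rewrite inE aS aX nXS add1n => -[->].
  by apply: eq_card => y; rewrite !inE negb_or andbA [~~ _ && _]andbC.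
have aSX : a |: S \subset X by rewrite subUset sub1set aX SX.
have aS0 : a |: S != set0 by apply/set0Pn; exists a; rewrite !inE eqxx.
move: (IH _ nXaS aSX aS0); rewrite nXS nXaS => inner_bound.
apply: leq_ltn_trans inner_bound _.
apply: proper_card; apply/properP; split.
  apply/subsetP => E; rewrite !inE => /andP [-> ES] /=.
  by apply: contra ES => ES; apply: subset_trans ES (subsetUr _ _).
exists [set a; b]; first by rewrite !inE abT /= subUset !sub1set bS andbT.
by rewrite !inE abT /= negbK subUset !sub1set !inE eqxx bS orbT.
Qed.

Lemma tree_edges_inside (S : {set A}) :
  is_tree X T -> S \subset X ->
  #|[set E in T | E \subset S]| + (0 < #|S|) <= #|S|.
Proof.
case=> TX2 cardT Tconn SX.
have TX E : E \in T -> E \subset X by move/TX2/andP => [].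
case: (eqVneq S set0) => [->|S0].
  rewrite cards0 addn0 leqn0 cards_eq0; apply/eqP/setP => E; rewrite !inE.
  apply/negP => /andP [ET]; rewrite subset0 => /eqP E0.
  by move: (TX2 E ET); rewrite E0 cards0 andbF.
have leave := edges_leaving_bound TX Tconn SX S0.
have splitT := cardsID [set E : {set A} | E \subset S] T.
have inT : T :&: [set E : {set A} | E \subset S] = [set E in T | E \subset S].
  by apply/setP => E; rewrite !inE.
have outT : T :\: [set E : {set A} | E \subset S] = [set E in T | ~~ (E \subset S)].
  by apply/setP => E; rewrite !inE andbC.
rewrite inT outT in splitT; rewrite -splitT in cardT.
have S_pos : 0 < #|S| by rewrite card_gt0.
have S_le : #|S| <= #|X| by apply: subset_leq_card.
rewrite cardsD (setIidPr SX) in leave; rewrite S_pos.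
move: leave cardT S_pos S_le.
move: #|[set E in T | ~~ (E \subset S)]| #|[set E in T | E \subset S]| #|S| #|X|.
move=> out inn s x; lia.
Qed.

End TreeEdges.

Lemma sum_Dz (V : finType) (Omega : Type) (D : Omega -> {ffun V -> bool} -> bool)
  (w : Omega) (I : finType) (P : pred I) (f : I -> {ffun V -> bool}) :
  (\sum_(i | P i) Dz D w (f i) = Posz #|[set i | P i && D w (f i)]|)%R.
Proof.
rewrite /Dz -(big_morph Posz PoszD (erefl (Posz 0))) -sum1_card.
rewrite big_mkcond [in RHS]big_mkcond; congr Posz; apply: eq_bigr => i _.
by rewrite inE; case: (P i); case: (D w (f i)).
Qed.

Lemma count0_fails (V : finType) (Omega : Type) (D : Omega -> {ffun V -> bool} -> bool)
  (w : Omega) (I : finType) (P : pred I) (f : I -> {ffun V -> bool}) :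
  #|[set i | P i && D w (f i)]| = 0 -> forall i, P i -> ~~ D w (f i).
Proof.
move/eqP; rewrite cards_eq0 => /eqP/setP count0 i Pi; apply/negP => Di.
by move: (count0 i); rewrite !inE Pi Di.
Qed.

Lemma positivity_forces (d s c k : nat) :
  (0 < Posz d - Posz s - Posz c + Posz k)%R -> d <= 1 -> k + (0 < s) <= s ->
  [/\ d = 1, s = 0 & c = 0].
Proof. by case: (posnP s) => [->|s_pos]; rewrite ?s_pos /= => *; split; lia. Qed.

Section UniqueWitness.
Variables (V : finType) (Omega : Type) (D : Omega -> {ffun V -> bool} -> bool).
Variables (B : {set V * bool}) (w : Omega).
Hypotheses (B_consistent : consistent B) (B_full : #|B| = #|V|).

(* If D fails when a single monotone literal is flipped, and when any nonempty
   set of the remaining literals Bprime is flipped, then c0 is the only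
   assignment where D holds: flipping any nonempty F only lowers D further. *)
Lemma only_c0_witness (Bplus Bprime : {set V * bool}) :
  Bplus :|: Bprime = B ->
  (forall L, L \in Bplus -> pos_monotonic D L) ->
  (forall L, L \in Bplus -> ~~ D w (setB B [set L])) ->
  (forall Bt : {set V * bool}, Bt \subset Bprime -> Bt != set0 -> ~~ D w (setB B Bt)) ->
  forall c, D w c -> c = setB B set0.
Proof.
move=> BU mono one_fails prime_fails c Dc.
have c_repr := setB_repr B_consistent B_full c.
set F := [set L in B | ~~ litval L c] in c_repr.
have FB : F \subset B by apply/subsetP => L; rewrite inE => /andP [].
case: (eqVneq F set0) => [F0|F0]; first by rewrite c_repr F0.
have F_le (G : {set V * bool}) : G \subset F -> F :&: Bprime \subset G ->
    (D w (setB B F) <= D w (setB B G))%N.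
  move=> GF FG; apply: mono_subset => // L /setDP [LF LG].
  have LB := subsetP FB _ LF; split => //; apply: mono.
  move: LB; rewrite -BU inE => /orP [] // LB'.
  have : L \in G by apply: (subsetP FG); rewrite in_setI LF LB'.
  by rewrite (negbTE LG).
suff : ~~ D w (setB B F) by rewrite -c_repr Dc.
have D_le (G : {set V * bool}) : G \subset F -> F :&: Bprime \subset G ->
    ~~ D w (setB B G) -> ~~ D w (setB B F).
  by move=> GF FG; apply: contra => DF; move: (F_le G GF FG); rewrite DF lt0b.
case: (eqVneq (F :&: Bprime) set0) => [FB0|FB0].
  have [L LF] := set0Pn _ F0.
  apply: (D_le [set L]); rewrite ?sub1set ?FB0 ?sub0set //; apply: one_fails.
  move: (subsetP FB _ LF); rewrite -BU inE => /orP [] // LB'.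
  by move/setP/(_ L): FB0; rewrite in_setI in_set0 LF LB'.
by apply: (D_le (F :&: Bprime)); rewrite ?subsetIl //; apply: prime_fails; rewrite ?subsetIr.
Qed.

(* If D holds at c0 and nowhere else, B is the unique minimal sufficient cause
   for w: any sufficient B0 must be true only at c0, hence contains B. *)
Lemma singular_of_unique_witness :
  D w (setB B set0) -> (forall c, D w c -> c = setB B set0) -> singular_for D B w.
Proof.
move=> Dc0 only_c0.
have sufficient_super (B0 : {set V * bool}) :
    B0 \subset B -> sufficient D B0 w -> B \subset B0.
  move=> B0B [_ B0_suff]; apply/subsetP => L LB; apply/negPn/negP => LB0.
  move/eqP: (setB1_neq0 B_consistent LB); apply.
  exact/only_c0/B0_suff/conjB_setB1.
have B_suff : sufficient D B w.
  split; first by exists (setB B set0); exact: conjB_setB0.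
  by move=> c /(conjB_eq_setB0 B_consistent B_full) ->.
split; first split => // B0 /properP [B0B [L LB LB0]] B0_suff.
  by move/subsetP/(_ L LB): (sufficient_super B0 B0B B0_suff); rewrite (negbTE LB0).
move=> B0 _ [B0_suff _]; have [[c B0c] B0_D] := B0_suff.
have B0c0 : conjB B0 (setB B set0) by rewrite -(only_c0 c (B0_D c B0c)).
have B0B := conjB_setB0_sub B_consistent B_full B0c0.
by apply/eqP; rewrite eqEsubset B0B (sufficient_super B0 B0B B0_suff).
Qed.
End UniqueWitness.

Theorem mainTheorem15 (V : finType) (Omega : Type)
  (D : Omega -> {ffun V -> bool} -> bool)
  (B Bplus Bprime : {set V * bool}) (T : {set {set V * bool}}) (w : Omega) :
  consistent B ->
  Bplus :|: Bprime = B -> [disjoint Bplus & Bprime] ->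
  #|B| = #|V| ->
  (forall L, L \in Bplus -> pos_monotonic D L) ->
  is_tree Bplus T ->
  (0 < Dz D w (setB B set0)
       - (\sum_(L in Bplus) Dz D w (setB B [set L]))
       - (\sum_(Bt : {set V * bool} | (Bt \subset Bprime) && (Bt != set0))
            Dz D w (setB B Bt))
       + (\sum_(E in T) Dz D w (setB B E)))%R ->
  singular D B.
Proof.
move=> B_cons BU _ B_full mono tree pos.
have BplusB : Bplus \subset B by rewrite -BU subsetUl.
set S := [set L | (L \in Bplus) && D w (setB B [set L])].
have SBplus : S \subset Bplus by apply/subsetP => L; rewrite inE => /andP [].
(* By monotonicity, both ends of a tree edge where D holds lie in S. *)
have edges_in_S : [set E | (E \in T) && D w (setB B E)] \subset [set E in T | E \subset S].
  apply/subsetP => E; rewrite !inE => /andP [ET DE]; rewrite ET /=.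
  have /andP [EBplus _] : (E \subset Bplus) && (#|E| == 2).
    by case: (tree) => TX2 _ _; exact: TX2.
  apply/subsetP => L LE; rewrite inE (subsetP EBplus _ LE) /=.
  apply: (mono_flip_one B_cons _ LE DE) => L' L'E.
  by have L'Bplus := subsetP EBplus _ L'E; split; [apply: (subsetP BplusB) | apply: mono].
rewrite !sum_Dz in pos.
(* With the tree bound, positivity forces D(c0) = 1, S = set0, and D = 0 on B'. *)
have [Dc0 S0 prime0] := positivity_forces pos (leq_b1 _)
  (leq_trans (leq_add (subset_leq_card edges_in_S) (leqnn _)) (tree_edges_inside tree SBplus)).
exists w; apply: singular_of_unique_witness => //; first by move: Dc0; case: (D w _).
apply: (only_c0_witness B_cons B_full BU mono); first exact: count0_fails S0.
by move=> Bt BtB' Bt0; apply: (count0_fails prime0); rewrite BtB'.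
Qed.
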